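(* Consider CAV $i$ subject to both the rear-end constraint with respect to $i_p$ and the safe-merging constraint with respect to $i-1$, as in the context, under (A1), (SA), (A3) and (A4). Assume $v_i\ge0$ at all times and $u_{\min}\le0$. Suppose that at each sampling time $t$ the applied control on $[t,t+\Delta t)$ is a feasible point of QP$_{12}(t)$ whenever QP$_{12}(t)$ is feasible. Then QP$_{12}(t_i^0+k\Delta t)$ is feasible for every integer $k\ge0$ with $[t_i^0+k\Delta t,\,t_i^0+(k+1)\Delta t]\subset[t_i^0,t_i^m]$.
   Context: **Vehicle model and times.** The vehicle dynamics are $\dot x_i=v_i$ and $\dot v_i=u_i$, where $x_i\in[0,L]$ is the distance travelled by CAV $i$ from its road's origin, $v_i$ its speed and $u_i$ its acceleration (the control). The merging point is at position $L>0$. CAV $i$ enters at time $t_i^0$ and reaches the merging point at time $t_i^m$. **Other vehicles.** CAV $i_p$ physically precedes $i$ on the same road, with position $x_{i_p}$, speed $v_{i_p}$ and acceleration $u_{i_p}$. CAV $i-1$ immediately precedes $i$ in first-in-first-out crossing order on the other road, with $x_{i-1}$, $v_{i-1}$ and $u_{i-1}$. All of these quantities are known to CAV $i$. **Constants and control bounds.** Let $z_{i,i_p}=x_{i_p}-x_i$ and $z_{i,i-1}=x_{i-1}-x_i$. The constants are $\varphi>0$, $\delta$, $k_1>0$, $k_2>0$, and $\varphi_2=\varphi/L$. Control bounds are $u_{\min}\le u_i\le u_{i,\max}$ with $u_{\min}<0<u_{i,\max}$. **(A1) Common minimum acceleration.** All CAVs share the minimum acceleration $u_{\min}$, so $u_{i_p}\ge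 u_{\min}$ and $u_{i-1}\ge u_{\min}$ at all times. **Rear-end functions:** - $b_1=z_{i,i_p}-\varphi v_i-\delta$. - $b_{\mathrm{cbf}_1}(u_i)=v_{i_p}-v_i-\varphi u_i+k_1b_1$. - $b_{F,1}=v_{i_p}-v_i+k_1b_1-\varphi u_{\min}$. - $b_{\eta_1}=v_{i_p}-v_i-\varphi u_{\min}$. - $\eta_1(u_i)=u_{i_p}-u_i+k_1b_{\eta_1}$. **Merging functions:** - $b_2=z_{i,i-1}-\varphi_2x_iv_i-\delta$. - $b_{\mathrm{cbf}_2}(u_i)=v_{i-1}-v_i-\varphi_2v_i^2-\varphi_2x_iu_i+k_2b_2$. - $b_{F,2}=v_{i-1}-v_i-\varphi_2v_i^2+k_2b_2-\varphi_2x_iu_{\min}$. - $b_{\eta_2}=v_{i-1}-v_i-\varphi_2v_i^2-\varphi_2x_iu_{\min}$. - $\eta_2(u_i)=u_{i-1}-u_i-2\varphi_2v_iu_i-\varphi_2v_iu_{\min}+k_2b_{\eta_2}$. Note that $\eta_j=\dot b_{\eta_j}+k_jb_{\eta_j}$ and $\dot b_{F,j}+k_jb_{F,j}=\eta_j+k_jb_{\mathrm{cbf}_j}$ for $j=1,2$. **QP$_{12}(t)$.** QP$_{12}(t)$ minimizes $\beta e_i^2+\tfrac12(u_i-u_{\mathrm{ref}}(t))^2$ over $(u_i,e_i)$ subject to: - $b_{\mathrm{cbf}_1}\ge0$ and $b_{\mathrm{cbf}_2}\ge0$, - $u_{\min}\le u_i\le u_{i,\max}$, - $\eta_1\ge0$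 and $\eta_2\ge0$, - a control Lyapunov constraint $c_1(t)+c_2(t)u_i\le e_i$ with free slack variable $e_i$. All quantities are evaluated at $t$. ''Feasible'' means the constraint set is nonempty. **(SA) Sampling / forward invariance.** The control is held constant on each $[t,t+\Delta t)$, and $\Delta t$ is small enough that for $b\in\{b_1,b_{F,1},b_{\eta_1}\}$ with gain $k=k_1$, and for $b\in\{b_2,b_{F,2},b_{\eta_2}\}$ with gain $k=k_2$: if $b(t)\ge0$ and $\dot b(t)+kb(t)\ge0$ under the applied controls, then $b(t+\Delta t)\ge0$. **(A3) Rear-end initial conditions.** $b_1(t_i^0)\ge0$, $b_{F,1}(t_i^0)\ge0$ and $b_{\eta_1}(t_i^0)\ge0$. **(A4) Merging initial conditions.** $b_2(t_i^0)\ge0$, $b_{F,2}(t_i^0)\ge0$ and $b_{\eta_2}(t_i^0)\ge0$. *)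

From Stdlib Require Import Reals Lra.
Open Scope R_scope.

Record params := Params {
  L : R; phi : R; delta : R; k1 : R; k2 : R; umin : R; umax : R }.

(* Trajectories (functions of time):
   xi vi ui   : position, speed, applied acceleration (control) of CAV i
   xip vip uip : same for the physically preceding CAV i_p
   xim vim uim : same for CAV i-1 (FIFO predecessor on the other road). *)
Record traj := Traj {
  xi : R -> R; vi : R -> R; ui : R -> R;
  xip : R -> R; vip : R -> R; uip : R -> R;
  xim : R -> R; vim : R -> R; uim : R -> R }.

Definition phi2 (p : params) : R := phi p / L p.

Section Fns.
Variables (p : params) (s : traj).

Definition b1 (t : R) : R := xip s t - xi s t - phi p * vi s t - delta p.
Definition bcbf1 (t u : R) : R :=
  vip s t - vi s t - phi p * u + k1 p * b1 t.
Definition bF1 (t : R) : R :=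
  vip s t - vi s t + k1 p * b1 t - phi p * umin p.
Definition beta1 (t : R) : R := vip s t - vi s t - phi p * umin p.
Definition eta1 (t u : R) : R := uip s t - u + k1 p * beta1 t.

Definition b2 (t : R) : R :=
  xim s t - xi s t - phi2 p * xi s t * vi s t - delta p.
Definition bcbf2 (t u : R) : R :=
  vim s t - vi s t - phi2 p * (vi s t)^2 - phi2 p * xi s t * u + k2 p * b2 t.
Definition bF2 (t : R) : R :=
  vim s t - vi s t - phi2 p * (vi s t)^2 + k2 p * b2 t - phi2 p * xi s t * umin p.
Definition beta2 (t : R) : R :=
  vim s t - vi s t - phi2 p * (vi s t)^2 - phi2 p * xi s t * umin p.
Definition eta2 (t u : R) : R :=
  uim s t - u - 2 * phi2 p * vi s t * u - phi2 p * vi s t * umin p + k2 p * beta2 t.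

(* ---- time derivatives of the above along the dynamics
        x' = v, v' = u, evaluated at t under the applied controls
        (ui s t, uip s t, uim s t) ---- *)
Definition db1 (t : R) : R := vip s t - vi s t - phi p * ui s t.
Definition dbF1 (t : R) : R := uip s t - ui s t + k1 p * db1 t.
Definition db2 (t : R) : R :=
  vim s t - vi s t - phi2 p * ((vi s t)^2 + xi s t * ui s t).
Definition dbF2 (t : R) : R :=
  uim s t - ui s t - 2 * phi2 p * vi s t * ui s t + k2 p * db2 t
  - phi2 p * vi s t * umin p.
Definition dbeta2 (t : R) : R :=
  uim s t - ui s t - 2 * phi2 p * vi s t * ui s t - phi2 p * vi s t * umin p.

(* ---- QP_12(t): constraint set at (u, e); c1 c2 are the CLF data ---- *)
Definition QP12_cons (c1 c2 : R -> R) (t u e : R) : Prop :=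
  0 <= bcbf1 t u /\ 0 <= bcbf2 t u /\
  umin p <= u <= umax p /\
  0 <= eta1 t u /\ 0 <= eta2 t u /\
  c1 t + c2 t * u <= e.

Definition QP12_feasible (c1 c2 : R -> R) (t : R) : Prop :=
  exists u e, QP12_cons c1 c2 t u e.

End Fns.

(* derivative of beta1 along the dynamics (p unused, kept for uniformity) *)
Definition dbeta1 (p : params) (s : traj) (t : R) : R := uip s t - ui s t.

(* Forward-invariance step of (SA) for one function b with gain k. *)
Definition sa_step (b db : R -> R) (k t dt : R) : Prop :=
  0 <= b t -> 0 <= db t + k * b t -> 0 <= b (t + dt).

Definition samp (t0 dt : R) (k : nat) : R := t0 + INR k * dt.

From Stdlib Require Import Reals Lra.
Open Scope R_scope.

(* The six barrier functions stay nonnegative at every sampling time: at t0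
   by (A3)-(A4), and from one sampling time to the next by (SA), because
   along the applied control the CBF expressions [b' + k b] are exactly the
   QP constraints [bcbf_j] and [eta_j] (plus [k_j bcbf_j] for [bF_j]).
   Nonnegativity of [bF_j] and [beta_j] in turn makes [u = umin] a feasible
   point of QP_12: at [umin] the constraint [bcbf_j] coincides with [bF_j],
   and [eta_j] is a sum of nonnegative terms (using (A1), [v >= 0] and
   [umin <= 0]). *)

Section Barriers.
Variables (p : params) (s : traj).

Definition barriers_nonneg (t : R) : Prop :=
  0 <= b1 p s t /\ 0 <= bF1 p s t /\ 0 <= beta1 p s t /\
  0 <= b2 p s t /\ 0 <= bF2 p s t /\ 0 <= beta2 p s t.

Definition barriers_sampled_invariant (t dt : R) : Prop :=
  sa_step (b1 p s) (db1 p s) (k1 p) t dt /\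
  sa_step (bF1 p s) (dbF1 p s) (k1 p) t dt /\
  sa_step (beta1 p s) (dbeta1 p s) (k1 p) t dt /\
  sa_step (b2 p s) (db2 p s) (k2 p) t dt /\
  sa_step (bF2 p s) (dbF2 p s) (k2 p) t dt /\
  sa_step (beta2 p s) (dbeta2 p s) (k2 p) t dt.

Lemma bcbf1_umin (t : R) : bcbf1 p s t (umin p) = bF1 p s t.
Proof. unfold bcbf1, bF1; ring. Qed.

Lemma bcbf2_umin (t : R) : bcbf2 p s t (umin p) = bF2 p s t.
Proof. unfold bcbf2, bF2; ring. Qed.

Lemma eta1_umin (t : R) :
  eta1 p s t (umin p) = (uip s t - umin p) + k1 p * beta1 p s t.
Proof. unfold eta1; ring. Qed.

Lemma eta2_umin (t : R) :
  eta2 p s t (umin p) =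
  (uim s t - umin p) - 3 * (phi2 p * vi s t * umin p) + k2 p * beta2 p s t.
Proof. unfold eta2; ring. Qed.

Lemma db1_cbf (t : R) : db1 p s t + k1 p * b1 p s t = bcbf1 p s t (ui s t).
Proof. unfold db1, bcbf1; ring. Qed.

Lemma dbF1_cbf (t : R) :
  dbF1 p s t + k1 p * bF1 p s t =
  eta1 p s t (ui s t) + k1 p * bcbf1 p s t (ui s t).
Proof. unfold dbF1, db1, bF1, eta1, beta1, bcbf1; ring. Qed.

Lemma dbeta1_cbf (t : R) :
  dbeta1 p s t + k1 p * beta1 p s t = eta1 p s t (ui s t).
Proof. unfold dbeta1, eta1; ring. Qed.

Lemma db2_cbf (t : R) : db2 p s t + k2 p * b2 p s t = bcbf2 p s t (ui s t).
Proof. unfold db2, bcbf2; ring. Qed.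

Lemma dbF2_cbf (t : R) :
  dbF2 p s t + k2 p * bF2 p s t =
  eta2 p s t (ui s t) + k2 p * bcbf2 p s t (ui s t).
Proof. unfold dbF2, db2, bF2, eta2, beta2, bcbf2; ring. Qed.

Lemma dbeta2_cbf (t : R) :
  dbeta2 p s t + k2 p * beta2 p s t = eta2 p s t (ui s t).
Proof. unfold dbeta2, eta2; ring. Qed.

Lemma QP12_cons_umin (c1 c2 : R -> R) (t : R) :
  0 <= k1 p -> 0 <= k2 p -> 0 <= phi2 p -> umin p <= 0 -> umin p <= umax p ->
  0 <= vi s t -> umin p <= uip s t -> umin p <= uim s t ->
  barriers_nonneg t ->
  QP12_cons p s c1 c2 t (umin p) (c1 t + c2 t * umin p).
Proof.
  intros Hk1 Hk2 Hphi2 Humin Hu Hv Hip Him (_ & HF1 & Hbeta1 & _ & HF2 & Hbeta2).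
  assert (Hvu : phi2 p * vi s t * umin p <= 0).
  { assert (0 <= phi2 p * vi s t) by (apply Rmult_le_pos; assumption). nra. }
  assert (Hkb1 : 0 <= k1 p * beta1 p s t) by (apply Rmult_le_pos; assumption).
  assert (Hkb2 : 0 <= k2 p * beta2 p s t) by (apply Rmult_le_pos; assumption).
  unfold QP12_cons; rewrite bcbf1_umin, bcbf2_umin, eta1_umin, eta2_umin.
  repeat split; lra.
Qed.

Lemma barriers_nonneg_step (c1 c2 : R -> R) (t dt e : R) :
  0 <= k1 p -> 0 <= k2 p ->
  barriers_sampled_invariant t dt -> barriers_nonneg t ->
  QP12_cons p s c1 c2 t (ui s t) e -> barriers_nonneg (t + dt).
Proof.
  intros Hk1 Hk2 (S1 & S2 & S3 & S4 & S5 & S6) (H1 & H2 & H3 & H4 & H5 & H6)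
    (C1 & C2 & _ & C4 & C5 & _).
  assert (K1 : 0 <= k1 p * bcbf1 p s t (ui s t)) by (apply Rmult_le_pos; assumption).
  assert (K2 : 0 <= k2 p * bcbf2 p s t (ui s t)) by (apply Rmult_le_pos; assumption).
  repeat split;
    [apply S1 | apply S2 | apply S3 | apply S4 | apply S5 | apply S6]; try assumption;
    rewrite ?db1_cbf, ?dbF1_cbf, ?dbeta1_cbf, ?db2_cbf, ?dbF2_cbf, ?dbeta2_cbf; lra.
Qed.

End Barriers.

Lemma samp_S (t0 dt : R) (k : nat) : samp t0 dt (S k) = samp t0 dt k + dt.
Proof. unfold samp; rewrite S_INR; ring. Qed.

Lemma samp_ge (t0 dt : R) (k : nat) : 0 <= dt -> t0 <= samp t0 dt k.
Proof.
  intro Hdt; unfold samp.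
  assert (Hk : 0 <= INR k * dt) by (apply Rmult_le_pos; [apply pos_INR | exact Hdt]).
  lra.
Qed.

Theorem theorem6 (p : params) (s : traj) (c1 c2 : R -> R) (t0 tm dt : R)
  (HL : 0 < L p) (Hphi : 0 < phi p) (Hk1 : 0 < k1 p) (Hk2 : 0 < k2 p)
  (Hbounds : umin p < 0 < umax p) (Hdt : 0 < dt)
  (Hx : forall t, t0 <= t <= tm -> 0 <= xi s t <= L p)
  (Hhold : forall (k : nat) t, samp t0 dt k <= t < samp t0 dt (S k) ->
             ui s t = ui s (samp t0 dt k))
  (HA1 : forall t, umin p <= uip s t /\ umin p <= uim s t)
  (HSA : forall k : nat,
     t0 <= samp t0 dt k -> samp t0 dt (S k) <= tm ->
     let t := samp t0 dt k in
     sa_step (b1 p s) (db1 p s) (k1 p) t dt /\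
     sa_step (bF1 p s) (dbF1 p s) (k1 p) t dt /\
     sa_step (beta1 p s) (dbeta1 p s) (k1 p) t dt /\
     sa_step (b2 p s) (db2 p s) (k2 p) t dt /\
     sa_step (bF2 p s) (dbF2 p s) (k2 p) t dt /\
     sa_step (beta2 p s) (dbeta2 p s) (k2 p) t dt)
  (HA3 : 0 <= b1 p s t0 /\ 0 <= bF1 p s t0 /\ 0 <= beta1 p s t0)
  (HA4 : 0 <= b2 p s t0 /\ 0 <= bF2 p s t0 /\ 0 <= beta2 p s t0)
  (Hv : forall t, 0 <= vi s t)
  (Humin : umin p <= 0)
  (Hctrl : forall k : nat,
     t0 <= samp t0 dt k -> samp t0 dt (S k) <= tm ->
     QP12_feasible p s c1 c2 (samp t0 dt k) ->
     exists e, QP12_cons p s c1 c2 (samp t0 dt k) (ui s (samp t0 dt k)) e) :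
  forall k : nat,
    t0 <= samp t0 dt k -> samp t0 dt (S k) <= tm ->
    QP12_feasible p s c1 c2 (samp t0 dt k).
Proof.
  assert (Hphi2 : 0 <= phi2 p) by (apply Rlt_le, Rdiv_lt_0_compat; assumption).
  assert (feasible : forall t, barriers_nonneg p s t -> QP12_feasible p s c1 c2 t).
  { intros t Hb; destruct (HA1 t) as [Hip Him].
    exists (umin p), (c1 t + c2 t * umin p).
    apply QP12_cons_umin; try lra; auto. }
  assert (invariant : forall k, samp t0 dt (S k) <= tm -> barriers_nonneg p s (samp t0 dt k)).
  { induction k as [|k IH]; intro Htm.
    - replace (samp t0 dt 0) with t0 by (unfold samp; simpl; ring).
      unfold barriers_nonneg; tauto.
    - assert (Hk : samp t0 dt (S k) <= tm) by (rewrite (samp_S t0 dt (S k)) in Htm; lra).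
      rewrite samp_S.
      assert (Hge : t0 <= samp t0 dt k) by (apply samp_ge; lra).
      destruct (Hctrl k Hge Hk (feasible _ (IH Hk))) as [e He].
      apply (barriers_nonneg_step p s c1 c2 _ _ e); try lra.
      + exact (HSA k Hge Hk).
      + exact (IH Hk).
      + exact He. }
  intros k _ Htm; exact (feasible _ (invariant k Htm)).
Qed.
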